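(* Let $H=\operatorname{diag}(\lambda_1,\dots,\lambda_n)$ with $\lambda_1\ge\dots\ge\lambda_{n-p}\ge0>\lambda_{n-p+1}\ge\dots\ge\lambda_n$ for some $1\le p<n$, let $f(x)=\frac12x^THx$, and let $L=\max(\lambda_1,-\lambda_n)$. Let $0<\alpha<1/L$, let $\gamma_k\in[0,1]$ and $\beta_k\in[0,1]$ for $k\ge1$, and generate iterates by choosing $x^1\in\mathbb{R}^n$, setting $x^0=x^1$, and for $k=1,2,\dots$ \[ y^k=x^k+\gamma_k(x^k-x^{k-1}),\qquad x^{k+1}=x^k+\beta_k(x^k-x^{k-1})-\alpha\nabla f(y^k). \] Then for every $i$ with $\lambda_i<0$ and every $k\ge0$, \[ x_i^{k+1}=x_i^0\prod_{m=0}^k(1+b_{i,m}), \] where $b_{i,0}=0$ and, for $k\ge1$, \[ b_{i,k}=(\beta_k+\gamma_k\alpha|\lambda_i|)\Big(1-\frac{1}{1+b_{i,k-1}}\Big)+\alpha|\lambda_i|. \] In addition, if $\gamma_{k+1}\ge\gamma_k$ and $\beta_{k+1}\ge\beta_k$ for all $k$, then $b_{i,k+1}\ge b_{i,k}$ for $k=1,2,\dots$.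
   Context: Here $x_i^k$ denotes the $i$-th component of $x^k$. The iteration is a general accelerated gradient framework: $\gamma_k=\beta_k=0$ gives gradient descent, $\gamma_k=0$ gives heavy-ball, $\gamma_k=\beta_k$ gives Nesterov-type accelerated gradient. *)

From HB Require Import structures.
From mathcomp Require Import all_boot all_order all_algebra.
Set Implicit Arguments. Unset Strict Implicit. Unset Printing Implicit Defensive.
Import Order.TTheory GRing.Theory Num.Theory.
Local Open Scope ring_scope.

Section Defs.
Variable R : realFieldType.

(* H = diag(lambda_1, ..., lambda_n), indices 0-based: lam i = lambda_{i+1}. *)
Definition diagH n (lam : 'I_n -> R) : 'M[R]_n := diag_mx (\row_i lam i).

Definition quad_f n (H : 'M[R]_n) (x : 'cV[R]_n) : R := 2^-1 * (x^T *m H *m x) 0 0.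

(* gradient of f(x) = 1/2 x^T H x for symmetric H: grad f(y) = H y *)
Definition grad_quad n (H : 'M[R]_n) (y : 'cV[R]_n) : 'cV[R]_n := H *m y.

(* component i of v, for i given as a natural number (0-based); 0 if out of range *)
Definition comp n (v : 'I_n -> R) (i : nat) : R :=
  if insub i is Some j then v j else 0.

Definition Lconst n (lam : 'I_n -> R) : R := Num.max (comp lam 0) (- comp lam n.-1).

Fixpoint bcoef (alpha a : R) (beta gamma : nat -> R) (k : nat) : R :=
  match k with
  | 0 => 0
  | k'.+1 => (beta k'.+1 + gamma k'.+1 * alpha * a) * (1 - 1 / (1 + bcoef alpha a beta gamma k'))
             + alpha * a
  end.
End Defs.

From mathcomp Require Import all_boot all_order all_algebra.
From mathcomp Require Import ring lra.
Import Order.TTheory GRing.Theory Num.Theory.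
Local Open Scope ring_scope.

(* Since H is diagonal, each coordinate of the iterates obeys a scalar
   three-term recurrence u_{k+1} = (1 + alpha a) u_k + c_k (u_k - u_{k-1}),
   with a = -lambda_i and c_k = beta_k + gamma_k alpha a.  Substituting
   u_{k+1} = (1 + b_k) u_k into it reproduces exactly the recursion defining
   b_k; as b_k >= 0 when a >= 0, the factor 1 + b_k never vanishes.
   Monotonicity follows because b_k is built from c_k and b_{k-1} by maps that
   are nondecreasing, t |-> t / (1 + t) being nondecreasing on t >= 0. *)

Lemma ler_frac1D {R : realFieldType} {s t : R} :
  0 <= s -> s <= t -> s / (1 + s) <= t / (1 + t).
Proof.
by move=> s0 st; rewrite ler_pdivrMr 1?mulrAC ?ler_pdivlMr; [nra | lra | lra].
Qed.

Section Coefficients.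
Context {R : realFieldType}.
Variables (alpha a : R) (beta gamma : nat -> R).

Definition momentum k := beta k + gamma k * alpha * a.

Local Notation b := (bcoef alpha a beta gamma).

Hypotheses (alpha_ge0 : 0 <= alpha) (a_ge0 : 0 <= a).
Hypotheses (beta_ge0 : forall k, (1 <= k)%N -> 0 <= beta k)
           (gamma_ge0 : forall k, (1 <= k)%N -> 0 <= gamma k).

Lemma momentum_ge0 k : (1 <= k)%N -> 0 <= momentum k.
Proof. by move=> k1; rewrite addr_ge0 ?beta_ge0 ?mulr_ge0 ?gamma_ge0. Qed.

Lemma bcoefS k :
  1 + b k != 0 -> b k.+1 = momentum k.+1 * (b k / (1 + b k)) + alpha * a.
Proof. by move=> nz; rewrite /= /momentum; congr (_ * _ + _); field. Qed.

Lemma bcoef_ge0 k : 0 <= b k.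
Proof.
elim: k => [|k IH]; first exact: lexx.
have nz : 1 + b k != 0 by rewrite gt_eqF // ltr_wpDr.
rewrite bcoefS // addr_ge0 ?mulr_ge0 ?momentum_ge0 ?divr_ge0 ?invr_ge0 ?addr_ge0 //.
Qed.

Lemma bcoef1D_neq0 k : 1 + b k != 0.
Proof. by rewrite gt_eqF // ltr_wpDr ?bcoef_ge0. Qed.

Lemma prod_bcoef_rec (u : nat -> R) :
  u 1%N = u 0%N ->
  (forall k, u k.+2 = (1 + alpha * a) * u k.+1 + momentum k.+1 * (u k.+1 - u k)) ->
  forall k, u k.+1 = u 0%N * \prod_(m < k.+1) (1 + b m).
Proof.
move=> u10 urec.
suff both : forall k, u k.+1 = u 0%N * \prod_(m < k.+1) (1 + b m)
                      /\ u k = u 0%N * \prod_(m < k) (1 + b m).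
  by move=> k; case: (both k).
elim=> [|k [IHk1 IHk]]; first by rewrite big_ord1 big_ord0 u10 addr0 !mulr1.
split=> //; rewrite urec IHk1 IHk !big_ord_recr /= /momentum.
by field; exact: bcoef1D_neq0.
Qed.

Lemma bcoef_nondecreasing :
  (forall k, (1 <= k)%N -> beta k <= beta k.+1) ->
  (forall k, (1 <= k)%N -> gamma k <= gamma k.+1) ->
  forall k, b k <= b k.+1.
Proof.
move=> beta_le gamma_le; elim=> [|k IH]; first exact: bcoef_ge0.
rewrite (bcoefS _ (bcoef1D_neq0 k.+1)) {1}(bcoefS _ (bcoef1D_neq0 k)) lerD2r.
have momentum_le : momentum k.+1 <= momentum k.+2.
  by rewrite /momentum lerD ?beta_le // -!mulrA ler_wpM2r ?gamma_le ?mulr_ge0.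
apply: (le_trans (ler_wpM2l (momentum_ge0 k.+1 isT) (ler_frac1D (bcoef_ge0 k) IH))).
apply: (ler_wpM2r _ momentum_le).
by rewrite divr_ge0 ?bcoef_ge0 // ltW // ltr_wpDr ?bcoef_ge0.
Qed.

End Coefficients.

Section Iterates.
Context {R : realFieldType} {n : nat} {lam : 'I_n -> R} {alpha : R}.
Context {gamma beta : nat -> R} {x y : nat -> 'cV[R]_n}.
Hypothesis hy : forall k, (1 <= k)%N -> y k = x k + gamma k *: (x k - x k.-1).
Hypothesis hx : forall k, (1 <= k)%N ->
  x k.+1 = x k + beta k *: (x k - x k.-1) - alpha *: grad_quad (diagH lam) (y k).

Lemma iterate_coord_rec (i : 'I_n) k :
  x k.+2 i 0 = (1 + alpha * - lam i) * x k.+1 i 0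
               + momentum alpha (- lam i) beta gamma k.+1 * (x k.+1 i 0 - x k i 0).
Proof.
rewrite hx // hy // /grad_quad /diagH mul_diag_mx /momentum !mxE /=; ring.
Qed.

End Iterates.

Theorem theorem4p1 (R : realFieldType) (n p : nat) (lam : 'I_n -> R)
  (hp1 : (1 <= p)%N) (hpn : (p < n)%N)
  (hsort : forall i j : 'I_n, (i <= j)%N -> lam j <= lam i)
  (hnonneg : forall i : 'I_n, (i < n - p)%N -> 0 <= lam i)
  (hneg : forall i : 'I_n, (n - p <= i)%N -> lam i < 0)
  (alpha : R) (halpha0 : 0 < alpha) (halphaL : alpha < 1 / Lconst lam)
  (gamma beta : nat -> R)
  (hgamma : forall k, (1 <= k)%N -> 0 <= gamma k <= 1)
  (hbeta : forall k, (1 <= k)%N -> 0 <= beta k <= 1)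
  (x y : nat -> 'cV[R]_n)
  (hx0 : x 0%N = x 1%N)
  (hy : forall k, (1 <= k)%N -> y k = x k + gamma k *: (x k - x k.-1))
  (hx : forall k, (1 <= k)%N ->
     x k.+1 = x k + beta k *: (x k - x k.-1) - alpha *: grad_quad (diagH lam) (y k)) :
  (forall i : 'I_n, lam i < 0 -> forall k : nat,
     x k.+1 i 0 = x 0%N i 0 * \prod_(m < k.+1) (1 + bcoef alpha `|lam i| beta gamma m))
  /\
  ((forall k, (1 <= k)%N -> gamma k <= gamma k.+1) ->
   (forall k, (1 <= k)%N -> beta k <= beta k.+1) ->
   forall i : 'I_n, lam i < 0 -> forall k : nat, (1 <= k)%N ->
     bcoef alpha `|lam i| beta gamma k <= bcoef alpha `|lam i| beta gamma k.+1).
Proof.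
have alpha_ge0 := ltW halpha0.
have beta_ge0 k (k1 : (1 <= k)%N) : 0 <= beta k by case/andP: (hbeta k k1).
have gamma_ge0 k (k1 : (1 <= k)%N) : 0 <= gamma k by case/andP: (hgamma k k1).
split=> [i lam_neg | gamma_le beta_le i _ k _].
  have a_ge0 : 0 <= - lam i by rewrite oppr_ge0 ltW.
  rewrite ltr0_norm //.
  apply: (prod_bcoef_rec _ _ _ _ alpha_ge0 a_ge0 beta_ge0 gamma_ge0 (fun k => x k i 0)).
  - by rewrite hx0.
  - exact: iterate_coord_rec hy hx i.
exact: bcoef_nondecreasing.
Qed.
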